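(* Let $\alpha=(\alpha_n)_{n\in\mathbb{N}}\in\ell^2$. The Rhaly operator $R_\alpha$ is compact on $\ell^2$ if and only if $\lim_{k\to\infty}\sigma_k=0$.
   Context: $\mathbb{N}=\{0,1,2,\dots\}$; $\ell^2$ is the space of square-summable functions $\mathbb{N}\to\mathbb{C}$. The Rhaly operator is $(R_\alpha f)(k)=\alpha_k\sum_{j=0}^k f(j)$. For $k\in\mathbb{N}$, $\sigma_k=\big(\sum_{j=2^k}^{2^{k+1}-1}(j+1)|\alpha_j|^2\big)^{1/2}$. *)

From Stdlib Require Import Reals.
From Coquelicot Require Import Coquelicot.
Open Scope R_scope.

Definition l2 (f : nat -> C) : Prop := ex_series (fun n => (Cmod (f n))^2).

Definition l2norm (f : nat -> C) : R := sqrt (Series (fun n => (Cmod (f n))^2)).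

Definition rhaly (alpha : nat -> C) (f : nat -> C) : nat -> C :=
  fun k => Cmult (alpha k) (sum_n f k).

Definition rhaly_sigma (alpha : nat -> C) (k : nat) : R :=
  sqrt (sum_n_m (fun j => INR (j + 1) * (Cmod (alpha j))^2)
                (2 ^ k) (2 ^ (S k) - 1)).

Definition compact_l2_op (T : (nat -> C) -> (nat -> C)) : Prop :=
  (forall f, l2 f -> l2 (T f)) /\
  (forall F : nat -> nat -> C,
      (forall n, l2 (F n)) ->
      (exists M : R, forall n, l2norm (F n) <= M) ->
      exists (phi : nat -> nat) (g : nat -> C),
        (forall n m, (n < m)%nat -> (phi n < phi m)%nat) /\
        l2 g /\
        is_lim_seq (fun n => l2norm (fun j => Cminus (T (F (phi n)) j) (g j))) 0).

(* Splitting the indices into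
   dyadic blocks [2^k <= j < 2^(k+1)], a weighted Hardy inequality, proved by induction over the
   blocks, gives [||R_alpha f||^2 <= (|alpha 0|^2 + 12 s) ||f||^2] as soon as [sigma_k^2 <= s]
   for all [k].

   If [sigma_k -> 0], cutting [alpha] off below [2^K] splits [R_alpha] into a tail of arbitrarily
   small norm and a head that only sees finitely many coordinates.  A bounded sequence has a
   coordinatewise convergent subsequence (diagonal argument); along it the head converges and the
   tail stays small, so [R_alpha] is compact.

   Conversely, the unit vectors [e_k = 2^(-k/2) 1_[0, 2^k)] satisfy [R_alpha e_k -> 0]
   coordinatewise, so compactness forces [||R_alpha e_k|| -> 0] along subsequences, while on the
   [k]-th block [|R_alpha e_k j|^2 = 2^k |alpha j|^2] gives [sigma_k^2 <= 2 ||R_alpha e_k||^2]. *)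

From Stdlib Require Import Reals Lra Lia ClassicalEpsilon Classical.
From Coquelicot Require Import Coquelicot.
Open Scope R_scope.

(** * Finite sums *)

(* [psum a n] is [a 0 + ... + a (n - 1)], whereas Coquelicot's [sum_n a n] has [n + 1] terms. *)
Fixpoint psum (a : nat -> R) (n : nat) : R :=
  match n with O => 0 | S n => psum a n + a n end.

Lemma sum_n_psum (a : nat -> R) (n : nat) : sum_n a n = psum a (S n).
Proof.
  induction n as [|n IH].
  - rewrite sum_O; simpl; ring.
  - rewrite sum_Sn, IH; reflexivity.
Qed.

Lemma psum_ext (a b : nat -> R) (n : nat) :
  (forall i, (i < n)%nat -> a i = b i) -> psum a n = psum b n.
Proof.
  induction n as [|n IH]; intros Hab; simpl; [reflexivity|].
  rewrite IH; [rewrite Hab by lia; reflexivity | intros; apply Hab; lia].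
Qed.

Lemma psum_le (a b : nat -> R) (n : nat) :
  (forall i, (i < n)%nat -> a i <= b i) -> psum a n <= psum b n.
Proof.
  induction n as [|n IH]; intros Hab; simpl; [lra|].
  assert (psum a n <= psum b n) by (apply IH; intros; apply Hab; lia).
  assert (a n <= b n) by (apply Hab; lia).
  lra.
Qed.

Lemma psum_ge0 (a : nat -> R) (n : nat) : (forall i, 0 <= a i) -> 0 <= psum a n.
Proof.
  intros Ha; induction n as [|n IH]; simpl; [lra|].
  specialize (Ha n); lra.
Qed.

Lemma psum_le_psum (a : nat -> R) (n m : nat) :
  (forall i, 0 <= a i) -> (n <= m)%nat -> psum a n <= psum a m.
Proof.
  intros Ha Hnm; induction Hnm as [|m _ IH]; simpl; [lra|].
  specialize (Ha m); lra.
Qed.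

Lemma psum_term_le (a : nat -> R) (i n : nat) :
  (forall j, 0 <= a j) -> (i < n)%nat -> a i <= psum a n.
Proof.
  intros Ha Hi.
  apply Rle_trans with (psum a (S i)).
  - simpl; pose proof (psum_ge0 a i Ha); lra.
  - apply psum_le_psum; assumption.
Qed.

Lemma psum_plus (a b : nat -> R) (n : nat) :
  psum (fun i => a i + b i) n = psum a n + psum b n.
Proof. induction n as [|n IH]; simpl; [ring|]. rewrite IH; ring. Qed.

Lemma psum_scal (c : R) (a : nat -> R) (n : nat) :
  psum (fun i => c * a i) n = c * psum a n.
Proof. induction n as [|n IH]; simpl; [ring|]. rewrite IH; ring. Qed.

Lemma psum_0 (n : nat) : psum (fun _ => 0) n = 0.
Proof. induction n as [|n IH]; simpl; [|rewrite IH]; ring. Qed.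

Lemma psum_const (c : R) (n : nat) : psum (fun _ => c) n = INR n * c.
Proof. induction n as [|n IH]; simpl psum; [simpl; ring|]. rewrite IH, S_INR; ring. Qed.

Lemma psum_add (a : nat -> R) (n m : nat) :
  psum a (n + m) = psum a n + psum (fun i => a (n + i)%nat) m.
Proof.
  induction m as [|m IH]; simpl.
  - rewrite Nat.add_0_r; ring.
  - rewrite Nat.add_succ_r; simpl; rewrite IH; ring.
Qed.

Lemma psum_cut (a : nat -> R) (m n : nat) :
  psum (fun i => if Nat.ltb i m then a i else 0) n = psum a (Nat.min n m).
Proof.
  induction n as [|n IH]; [reflexivity|].
  change (psum (fun i => if Nat.ltb i m then a i else 0) n
          + (if Nat.ltb n m then a n else 0) = psum a (Nat.min (S n) m)).
  rewrite IH; destruct (Nat.ltb n m) eqn:E.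
  - apply Nat.ltb_lt in E; rewrite !Nat.min_l by lia; reflexivity.
  - apply Nat.ltb_ge in E; rewrite !Nat.min_r by lia; ring.
Qed.

Lemma psum_sqr_le (b : nat -> R) (n : nat) :
  (psum b n) ^ 2 <= INR n * psum (fun i => b i ^ 2) n.
Proof.
  induction n as [|n IH]; [simpl; lra|].
  change ((psum b n + b n) ^ 2 <= INR (S n) * (psum (fun i => b i ^ 2) n + b n ^ 2)).
  rewrite S_INR.
  set (A := psum b n) in *; set (B := psum (fun i => b i ^ 2) n) in *; set (x := b n).
  destruct (Nat.eq_dec n 0) as [->|Hn0]; [unfold A, B; simpl; lra|].
  assert (Hn : 0 < INR n) by (apply lt_0_INR; lia).
  (* AM-GM: [2 A x <= A^2 / n + n x^2 <= B + n x^2]. *)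
  assert (Hcross : 2 * A * x <= B + INR n * x ^ 2).
  { pose proof (pow2_ge_0 (A - INR n * x)).
    assert (0 <= INR n * (B + INR n * x ^ 2 - 2 * A * x)) by nra.
    destruct (Rle_or_lt 0 (B + INR n * x ^ 2 - 2 * A * x)); [lra | nra]. }
  nra.
Qed.

Lemma is_lim_seq_sqr (u : nat -> R) (l : R) :
  is_lim_seq u l -> is_lim_seq (fun n => u n ^ 2) (l ^ 2).
Proof.
  intros Hu.
  apply (is_lim_seq_ext (fun n => u n * (u n * 1))); [intros; simpl; ring|].
  replace (Finite (l ^ 2)) with (Rbar_mult l (Rbar_mult l 1)) by (simpl; f_equal; ring).
  apply is_lim_seq_mult'; [exact Hu|].
  apply is_lim_seq_mult'; [exact Hu | apply is_lim_seq_const].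
Qed.

Lemma psum_is_lim (v : nat -> nat -> R) (c : nat -> R) (N : nat) :
  (forall i, is_lim_seq (fun n => v n i) (c i)) ->
  is_lim_seq (fun n => psum (v n) N) (psum c N).
Proof.
  intros Hv; induction N as [|N IH]; simpl.
  - apply is_lim_seq_const.
  - apply is_lim_seq_plus'; auto.
Qed.

Lemma sum_n_nondecreasing (a : nat -> R) (n : nat) :
  (forall i, 0 <= a i) -> sum_n a n <= sum_n a (S n).
Proof. intros Ha; rewrite sum_Sn; specialize (Ha (S n)); unfold plus; simpl; lra. Qed.

Lemma psum_le_Series (a : nat -> R) (n : nat) :
  (forall i, 0 <= a i) -> ex_series a -> psum a n <= Series a.
Proof.
  intros Ha Hex.
  assert (Hsum : forall m, sum_n a m <= Series a).
  { apply is_lim_seq_incr_compare; [apply Series_correct, Hex|].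
    intros m; apply sum_n_nondecreasing, Ha. }
  destruct n as [|n]; [|rewrite <- sum_n_psum; apply Hsum].
  specialize (Hsum O); specialize (Ha O); rewrite sum_O in Hsum; simpl; lra.
Qed.

Lemma Series_ge0 (a : nat -> R) : (forall i, 0 <= a i) -> ex_series a -> 0 <= Series a.
Proof. intros Ha Hex; exact (psum_le_Series a 0 Ha Hex). Qed.

Lemma ex_series_psum_bounded (a : nat -> R) (B : R) :
  (forall i, 0 <= a i) -> (forall n, psum a n <= B) -> ex_series a /\ Series a <= B.
Proof.
  intros Ha HB.
  assert (Hinc : forall n, sum_n a n <= sum_n a (S n))
    by (intros n; apply sum_n_nondecreasing, Ha).
  assert (Hsum : forall n, sum_n a n <= B) by (intros n; rewrite sum_n_psum; apply HB).
  destruct (ex_finite_lim_seq_incr _ _ Hinc Hsum) as [l Hl].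
  assert (Hs : is_series a l) by exact Hl.
  split; [exists l; exact Hs|].
  rewrite (is_series_unique _ _ Hs).
  exact (is_lim_seq_le _ _ _ _ Hsum Hl (is_lim_seq_const B)).
Qed.

(** * Square-summable sequences *)

Lemma Cmod_sub_sqr_le (a b : C) : Cmod (a - b) ^ 2 <= 2 * Cmod a ^ 2 + 2 * Cmod b ^ 2.
Proof.
  change (a - b)%C with (a + - b)%C.
  pose proof (Cmod_triangle a (- b)) as Htri; rewrite Cmod_opp in Htri.
  pose proof (Cmod_ge_0 (a + - b)); pose proof (Cmod_ge_0 a); pose proof (Cmod_ge_0 b).
  pose proof (pow2_ge_0 (Cmod a - Cmod b)).
  assert (Cmod (a + - b) ^ 2 <= (Cmod a + Cmod b) ^ 2) by (apply pow_incr; lra).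
  nra.
Qed.

Lemma l2_psum_bounded (f : nat -> C) (B : R) :
  (forall n, psum (fun j => Cmod (f j) ^ 2) n <= B) -> l2 f /\ l2norm f <= sqrt B.
Proof.
  intros HB.
  destruct (ex_series_psum_bounded _ B (fun j => pow2_ge_0 _) HB) as [Hl2 Hle].
  split; [exact Hl2|].
  apply sqrt_le_1_alt, Hle.
Qed.

Lemma psum_le_l2norm_sqr (f : nat -> C) (n : nat) :
  l2 f -> psum (fun j => Cmod (f j) ^ 2) n <= l2norm f ^ 2.
Proof.
  intros Hf; unfold l2norm.
  rewrite pow2_sqrt by (apply Series_ge0; [intros; apply pow2_ge_0 | exact Hf]).
  apply psum_le_Series; [intros; apply pow2_ge_0 | exact Hf].
Qed.

Lemma Cmod_le_l2norm (f : nat -> C) (j : nat) : l2 f -> Cmod (f j) <= l2norm f.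
Proof.
  intros Hf.
  assert (Cmod (f j) ^ 2 <= l2norm f ^ 2).
  { eapply Rle_trans; [|apply (psum_le_l2norm_sqr f (S j) Hf)].
    apply (psum_term_le (fun j => Cmod (f j) ^ 2)); [intros; apply pow2_ge_0 | lia]. }
  pose proof (Cmod_ge_0 (f j)); pose proof (sqrt_pos (Series (fun n => Cmod (f n) ^ 2))).
  unfold l2norm in *; nra.
Qed.

Lemma l2_sub (f g : nat -> C) : l2 f -> l2 g -> l2 (fun j => f j - g j)%C.
Proof.
  intros Hf Hg.
  apply (l2_psum_bounded _ (2 * l2norm f ^ 2 + 2 * l2norm g ^ 2)); intros n.
  apply Rle_trans with (psum (fun j => 2 * Cmod (f j) ^ 2 + 2 * Cmod (g j) ^ 2) n).
  - apply psum_le; intros; apply Cmod_sub_sqr_le.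
  - rewrite psum_plus, !psum_scal.
    pose proof (psum_le_l2norm_sqr f n Hf); pose proof (psum_le_l2norm_sqr g n Hg); lra.
Qed.

Lemma l2norm_ext (f g : nat -> C) : (forall j, f j = g j) -> l2norm f = l2norm g.
Proof.
  intros Hfg; unfold l2norm; f_equal; apply Series_ext; intros j; rewrite Hfg; reflexivity.
Qed.

(** * A dyadic Hardy inequality *)

Lemma lt_pow2 (n : nat) : (n < 2 ^ n)%nat.
Proof. induction n; simpl; lia. Qed.

Lemma INR_pow2_gt0 (k : nat) : 0 < INR (2 ^ k).
Proof. apply lt_0_INR; pose proof (lt_pow2 k); lia. Qed.

Definition dyadic_block (a : nat -> R) (k : nat) : R :=
  psum (fun i => a (2 ^ k + i)%nat) (2 ^ k).

Lemma dyadic_block_ge0 (a : nat -> R) (k : nat) :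
  (forall j, 0 <= a j) -> 0 <= dyadic_block a k.
Proof. intros Ha; apply psum_ge0; intros; apply Ha. Qed.

Lemma sum_n_m_dyadic (a : nat -> R) (k : nat) :
  sum_n_m a (2 ^ k) (2 ^ S k - 1) = dyadic_block a k.
Proof.
  pose proof (lt_pow2 k) as Hk.
  assert (E : (2 ^ k = S (2 ^ k - 1))%nat) by lia.
  rewrite E at 1; rewrite (@sum_n_m_sum_n R_AbelianGroup) by (simpl; lia).
  change (sum_n a (2 ^ S k - 1) - sum_n a (2 ^ k - 1) = dyadic_block a k).
  rewrite !sum_n_psum, <- E.
  replace (S (2 ^ S k - 1)) with (2 ^ k + 2 ^ k)%nat by (simpl; lia).
  rewrite psum_add; unfold dyadic_block; ring.
Qed.

Definition rhaly_weight (alpha : nat -> C) (j : nat) : R := INR (j + 1) * Cmod (alpha j) ^ 2.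

Lemma rhaly_weight_ge0 (alpha : nat -> C) (j : nat) : 0 <= rhaly_weight alpha j.
Proof. apply Rmult_le_pos; [apply pos_INR | apply pow2_ge_0]. Qed.

Lemma rhaly_sigma_sqr (alpha : nat -> C) (k : nat) :
  rhaly_sigma alpha k ^ 2 = dyadic_block (rhaly_weight alpha) k.
Proof.
  unfold rhaly_sigma; rewrite pow2_sqrt; rewrite sum_n_m_dyadic; [reflexivity|].
  apply dyadic_block_ge0, rhaly_weight_ge0.
Qed.

Section Hardy.

Variables (a : nat -> R) (s : R).
Hypothesis a_ge0 : forall j, 0 <= a j.
Hypothesis block_le : forall k, dyadic_block (fun j => INR (j + 1) * a j) k <= s.

Lemma hardy_bound_ge0 : 0 <= s.
Proof.
  eapply Rle_trans; [|apply (block_le 0)].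
  apply dyadic_block_ge0; intros j; apply Rmult_le_pos; [apply pos_INR | apply a_ge0].
Qed.

Lemma hardy_block_le (g : nat -> R) (k : nat) :
  (forall j, 0 <= g j) ->
  psum (fun i => a (2 ^ k + i)%nat * psum g (S (2 ^ k + i)) ^ 2) (2 ^ k)
  <= s / INR (2 ^ k) * psum g (2 ^ k + 2 ^ k) ^ 2.
Proof.
  intros Hg.
  pose proof (INR_pow2_gt0 k) as Ht.
  assert (Hblock : INR (2 ^ k) * psum (fun i => a (2 ^ k + i)%nat) (2 ^ k) <= s).
  { eapply Rle_trans; [|apply (block_le k)].
    rewrite <- psum_scal; apply psum_le; intros i Hi.
    apply Rmult_le_compat_r; [apply a_ge0 | apply le_INR; lia]. }
  apply Rle_trans with (psum (fun i => a (2 ^ k + i)%nat) (2 ^ k) * psum g (2 ^ k + 2 ^ k) ^ 2).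
  - rewrite Rmult_comm, <- psum_scal; apply psum_le; intros i Hi.
    rewrite Rmult_comm; apply Rmult_le_compat_r; [apply a_ge0|].
    apply pow_incr; split; [apply psum_ge0, Hg | apply psum_le_psum; [apply Hg | lia]].
  - apply Rmult_le_compat_r; [apply pow2_ge_0|].
    apply (Rmult_le_reg_l (INR (2 ^ k))); [exact Ht|].
    unfold Rdiv; rewrite <- Rmult_assoc, (Rmult_comm _ s), Rmult_assoc, Rinv_r, Rmult_1_r by lra.
    exact Hblock.
Qed.

Lemma hardy_step_ineq (u t e P d : R) :
  0 <= u -> d ^ 2 <= t * e -> u * (3 * (P + d) ^ 2 - 4 * P ^ 2) <= 12 * (u * t) * e.
Proof.
  intros Hu Hd.
  (* [3 (P + d)^2 - 4 P^2 = 12 d^2 - (P - 3 d)^2] *)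
  assert (Hsq : 3 * (P + d) ^ 2 - 4 * P ^ 2 <= 12 * d ^ 2)
    by (pose proof (pow2_ge_0 (P - 3 * d)); nra).
  nra.
Qed.

(* The second summand on the left is a potential that pays for the next dyadic block. *)
Lemma hardy_dyadic (g : nat -> R) (K : nat) :
  (forall j, 0 <= g j) ->
  psum (fun j => a j * psum g (S j) ^ 2) (2 ^ K) + 4 * (s / INR (2 ^ K)) * psum g (2 ^ K) ^ 2
  <= a 0%nat * g 0%nat ^ 2 + 12 * s * psum (fun j => g j ^ 2) (2 ^ K).
Proof.
  intros Hg; pose proof hardy_bound_ge0 as Hs0.
  induction K as [|K IH].
  - simpl; unfold Rdiv; rewrite Rinv_1.
    pose proof (pow2_ge_0 (g O)); pose proof (a_ge0 O); nra.
  - replace (2 ^ S K)%nat with (2 ^ K + 2 ^ K)%nat by (simpl; lia).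
    pose proof (hardy_block_le g K Hg) as Hblock.
    pose proof (INR_pow2_gt0 K) as Ht.
    pose proof (psum_sqr_le (fun i => g (2 ^ K + i)%nat) (2 ^ K)) as HCS.
    rewrite psum_add in Hblock |- *; rewrite !psum_add.
    rewrite plus_INR.
    set (t := INR (2 ^ K)) in *; set (u := s / t).
    assert (Hu : 0 <= u) by (apply Rmult_le_pos; [lra | left; apply Rinv_0_lt_compat; lra]).
    assert (Hut : u * t = s) by (unfold u; field; lra).
    replace (s / (t + t)) with (u / 2) by (unfold u; field; lra).
    fold u in IH, Hblock.
    pose proof (hardy_step_ineq u t (psum (fun i => g (2 ^ K + i)%nat ^ 2) (2 ^ K))
                  (psum g (2 ^ K)) (psum (fun i => g (2 ^ K + i)%nat) (2 ^ K)) Hu HCS) as Hstep.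
    rewrite Hut in Hstep.
    pose proof (psum_ge0 (fun i => g (2 ^ K + i)%nat ^ 2) (2 ^ K) (fun _ => pow2_ge_0 _)).
    nra.
Qed.

Lemma hardy_inequality (g : nat -> R) (N : nat) :
  (forall j, 0 <= g j) ->
  psum (fun j => a j * psum g (S j) ^ 2) N <= (a 0%nat + 12 * s) * psum (fun j => g j ^ 2) N.
Proof.
  intros Hg; pose proof hardy_bound_ge0 as Hs0.
  (* Apply the dyadic estimate to [g] cut off at [N], over the block range [2^N > N]. *)
  set (gN := fun j => if Nat.ltb j N then g j else 0).
  assert (HgN : forall j, 0 <= gN j)
    by (intros j; unfold gN; destruct (Nat.ltb j N); [apply Hg | lra]).
  pose proof (hardy_dyadic gN N HgN) as H.
  pose proof (lt_pow2 N) as HN.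
  assert (Hlhs : psum (fun j => a j * psum g (S j) ^ 2) N
                 <= psum (fun j => a j * psum gN (S j) ^ 2) (2 ^ N)).
  { rewrite (psum_ext _ (fun j => a j * psum gN (S j) ^ 2)).
    - apply psum_le_psum; [intros; apply Rmult_le_pos; [apply a_ge0 | apply pow2_ge_0] | lia].
    - intros j Hj; unfold gN; rewrite psum_cut, Nat.min_l by lia; reflexivity. }
  assert (Hrhs : psum (fun j => gN j ^ 2) (2 ^ N) = psum (fun j => g j ^ 2) N).
  { transitivity (psum (fun j => if Nat.ltb j N then g j ^ 2 else 0) (2 ^ N)).
    - apply psum_ext; intros j _; unfold gN; destruct (Nat.ltb j N); simpl; ring.
    - rewrite psum_cut, Nat.min_r by lia; reflexivity. }
  assert (Hg0 : a 0%nat * gN 0%nat ^ 2 <= a 0%nat * psum (fun j => g j ^ 2) N).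
  { apply Rmult_le_compat_l; [apply a_ge0|]; unfold gN.
    destruct N as [|N]; simpl; [lra|].
    apply (psum_term_le (fun j => g j ^ 2) 0 (S N)); [intros; apply pow2_ge_0 | lia]. }
  assert (0 <= 4 * (s / INR (2 ^ N)) * psum gN (2 ^ N) ^ 2).
  { apply Rmult_le_pos; [|apply pow2_ge_0].
    pose proof (INR_pow2_gt0 N); apply Rmult_le_pos; [lra|].
    apply Rmult_le_pos; [lra | left; apply Rinv_0_lt_compat; lra]. }
  rewrite Hrhs in H; nra.
Qed.

End Hardy.

(** * Boundedness of the Rhaly operator *)

Lemma Cmod_sum_n_le (f : nat -> C) (j : nat) :
  Cmod (sum_n f j) <= psum (fun l => Cmod (f l)) (S j).
Proof.
  induction j as [|j IH].
  - rewrite sum_O; simpl; lra.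
  - rewrite sum_Sn; eapply Rle_trans; [apply Cmod_triangle|].
    simpl psum in *; lra.
Qed.

Lemma rhaly_sub (alpha f g : nat -> C) (j : nat) :
  (rhaly alpha f j - rhaly alpha g j)%C = rhaly alpha (fun l => f l - g l)%C j.
Proof.
  unfold rhaly.
  assert (Hsum : sum_n (fun l => f l - g l)%C j = (sum_n f j - sum_n g j)%C).
  { induction j as [|j IH]; [rewrite !sum_O; reflexivity|].
    rewrite !sum_Sn, IH; unfold plus; simpl; ring. }
  rewrite Hsum; ring.
Qed.

Lemma Cmod_rhaly_le (alpha f : nat -> C) (j : nat) :
  Cmod (rhaly alpha f j) <= Cmod (alpha j) * psum (fun l => Cmod (f l)) (S j).
Proof.
  unfold rhaly; rewrite Cmod_mult.
  apply Rmult_le_compat_l; [apply Cmod_ge_0 | apply Cmod_sum_n_le].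
Qed.

Lemma rhaly_psum_le (beta f : nat -> C) (s : R) (N : nat) :
  (forall k, dyadic_block (rhaly_weight beta) k <= s) ->
  psum (fun j => Cmod (rhaly beta f j) ^ 2) N
  <= (Cmod (beta 0%nat) ^ 2 + 12 * s) * psum (fun j => Cmod (f j) ^ 2) N.
Proof.
  intros Hs.
  eapply Rle_trans.
  - apply psum_le; intros j _; rewrite <- Rpow_mult_distr.
    apply pow_incr; split; [apply Cmod_ge_0 | apply Cmod_rhaly_le].
  - apply (hardy_inequality (fun j => Cmod (beta j) ^ 2) s (fun j => pow2_ge_0 _) Hs
             (fun j => Cmod (f j)) N (fun j => Cmod_ge_0 _)).
Qed.

Lemma rhaly_l2 (beta f : nat -> C) (s : R) :
  (forall k, dyadic_block (rhaly_weight beta) k <= s) -> l2 f -> l2 (rhaly beta f).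
Proof.
  intros Hs Hf.
  apply (l2_psum_bounded _ ((Cmod (beta 0%nat) ^ 2 + 12 * s) * l2norm f ^ 2)); intros N.
  eapply Rle_trans; [apply (rhaly_psum_le beta f s N Hs)|].
  apply Rmult_le_compat_l; [|apply psum_le_l2norm_sqr, Hf].
  pose proof (hardy_bound_ge0 (fun j => Cmod (beta j) ^ 2) s (fun j => pow2_ge_0 _) Hs).
  pose proof (pow2_ge_0 (Cmod (beta 0%nat))); lra.
Qed.

Lemma rhaly_block_lim (alpha : nat -> C) :
  is_lim_seq (rhaly_sigma alpha) 0 -> is_lim_seq (dyadic_block (rhaly_weight alpha)) 0.
Proof.
  intros Hsig.
  apply (is_lim_seq_ext (fun k => rhaly_sigma alpha k ^ 2)); [intros; apply rhaly_sigma_sqr|].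
  replace (Finite 0) with (Finite (0 ^ 2)) by (f_equal; ring).
  apply is_lim_seq_sqr, Hsig.
Qed.

Lemma rhaly_block_eventually_le (alpha : nat -> C) (delta : R) :
  is_lim_seq (rhaly_sigma alpha) 0 -> 0 < delta ->
  exists K, forall k, (K <= k)%nat -> dyadic_block (rhaly_weight alpha) k <= delta.
Proof.
  intros Hsig Hdelta.
  destruct (proj2 (is_lim_seq_spec _ _) (rhaly_block_lim alpha Hsig) (mkposreal _ Hdelta))
    as [K HK].
  exists K; intros k Hk; specialize (HK k Hk); simpl in HK.
  rewrite Rminus_0_r in HK; apply Rabs_def2 in HK; lra.
Qed.

Lemma rhaly_block_bounded (alpha : nat -> C) :
  is_lim_seq (rhaly_sigma alpha) 0 ->
  exists s, forall k, dyadic_block (rhaly_weight alpha) k <= s.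
Proof.
  intros Hsig.
  destruct (rhaly_block_eventually_le alpha 1 Hsig Rlt_0_1) as [K HK].
  set (b := dyadic_block (rhaly_weight alpha)).
  assert (Hb : forall k, 0 <= b k) by (intros k; apply dyadic_block_ge0, rhaly_weight_ge0).
  exists (psum b K + 1); intros k.
  pose proof (psum_ge0 b K Hb).
  destruct (Nat.lt_ge_cases k K) as [Hk | Hk].
  - pose proof (psum_term_le b k K Hb Hk); lra.
  - specialize (HK k Hk); fold b in HK; lra.
Qed.

(** * Subsequences and the diagonal argument *)

Definition strictly_increasing (phi : nat -> nat) : Prop := forall n, (phi n < phi (S n))%nat.

Lemma strictly_increasing_lt (phi : nat -> nat) :
  strictly_increasing phi -> forall n m, (n < m)%nat -> (phi n < phi m)%nat.
Proof.
  intros Hphi n m Hnm; induction Hnm as [|m _ IH]; [apply Hphi|].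
  specialize (Hphi m); lia.
Qed.

Lemma strictly_increasing_ge (phi : nat -> nat) :
  strictly_increasing phi -> forall n, (n <= phi n)%nat.
Proof. intros Hphi n; induction n as [|n IH]; [lia|]. specialize (Hphi n); lia. Qed.

Lemma strictly_increasing_comp (phi psi : nat -> nat) :
  strictly_increasing phi -> strictly_increasing psi -> strictly_increasing (fun n => phi (psi n)).
Proof. intros Hphi Hpsi n; apply strictly_increasing_lt; auto. Qed.

Lemma strictly_increasing_choice (P : nat -> nat -> Prop) :
  (forall i N, exists p, (N <= p)%nat /\ P i p) ->
  exists psi, strictly_increasing psi /\ forall i, P i (psi i).
Proof.
  intros H.
  set (ch := fun i N => proj1_sig (constructive_indefinite_description _ (H i N))).
  assert (Hch : forall i N, (N <= ch i N)%nat /\ P i (ch i N))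
    by (intros i N; exact (proj2_sig (constructive_indefinite_description _ (H i N)))).
  exists (fix psi i := match i with O => ch O O | S i => ch (S i) (S (psi i)) end).
  split.
  - intros n; apply (Hch (S n)).
  - intros [|i]; apply Hch.
Qed.

Lemma is_lim_seq_later_terms (u v : nat -> R) (l : R) (j : nat) :
  (forall n, (j <= n)%nat -> exists m, (n <= m)%nat /\ v n = u m) ->
  is_lim_seq u l -> is_lim_seq v l.
Proof.
  intros Huv Hu; apply is_lim_seq_spec; intros eps.
  destruct (proj2 (is_lim_seq_spec _ _) Hu eps) as [N HN].
  exists (Nat.max N j); intros n Hn.
  destruct (Huv n ltac:(lia)) as [m [Hm ->]]; apply HN; lia.
Qed.

Lemma not_lim_subseq (u : nat -> R) :
  ~ is_lim_seq u 0 ->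
  exists eps psi, 0 < eps /\ strictly_increasing psi /\ forall i, eps <= Rabs (u (psi i)).
Proof.
  intros Hu.
  assert (Heps : exists eps, 0 < eps /\ forall N, exists n, (N <= n)%nat /\ eps <= Rabs (u n)).
  { apply NNPP; intros Hno; apply Hu, is_lim_seq_spec; intros eps.
    apply NNPP; intros HN; apply Hno; exists eps; split; [apply cond_pos|].
    intros N; apply NNPP; intros Hn; apply HN; exists N; intros n Hn'.
    rewrite Rminus_0_r; apply Rnot_le_lt; intros Hle; apply Hn; exists n; auto. }
  destruct Heps as [eps [Heps Hinf]].
  destruct (strictly_increasing_choice (fun _ n => eps <= Rabs (u n))) as [psi [Hpsi Hp]];
    [intros _; apply Hinf|].
  exists eps, psi; auto.
Qed.

Lemma bounded_seq_subseq_lim (u : nat -> R) (B : R) :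
  (forall n, Rabs (u n) <= B) ->
  exists psi (l : R), strictly_increasing psi /\ is_lim_seq (fun n => u (psi n)) l.
Proof.
  intros HB.
  destruct (Bolzano_Weierstrass u (fun c => -B <= c <= B) (compact_P3 (-B) B)) as [l Hl].
  { intros n; specialize (HB n); apply Rabs_le_between in HB; exact HB. }
  destruct (strictly_increasing_choice (fun i p => Rabs (u p - l) < (/ 2) ^ i)) as [psi [Hpsi Hp]].
  { intros i N.
    assert (Hr : 0 < (/ 2) ^ i) by (apply pow_lt; lra).
    apply (Hl (disc l (mkposreal _ Hr)) N).
    exists (mkposreal _ Hr); intros y Hy; exact Hy. }
  exists psi, l; split; [exact Hpsi|].
  assert (Hdiff : is_lim_seq (fun n => u (psi n) - l) 0).
  { apply is_lim_seq_abs_0.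
    apply (is_lim_seq_le_le (fun _ => 0) _ (fun n => (/ 2) ^ n)).
    - intros n; split; [apply Rabs_pos | left; apply Hp].
    - apply is_lim_seq_const.
    - apply is_lim_seq_geom; rewrite Rabs_pos_eq; lra. }
  apply (is_lim_seq_ext (fun n => (u (psi n) - l) + l)); [intros; ring|].
  replace (Finite l) with (Rbar_plus 0 l) by (simpl; f_equal; ring).
  apply is_lim_seq_plus'; [exact Hdiff | apply is_lim_seq_const].
Qed.

Definition is_lim_Cseq (u : nat -> C) (l : C) : Prop := is_lim_seq (fun n => Cmod (u n - l)) 0.

Lemma is_lim_seq_dist_0 (w : nat -> R) (l : R) :
  is_lim_seq w l -> is_lim_seq (fun n => Rabs (w n - l)) 0.
Proof.
  intros Hw; apply (is_lim_seq_abs_0 (fun n => w n - l)).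
  replace (Finite 0) with (Finite (l - l)) by (f_equal; ring).
  apply is_lim_seq_minus'; [exact Hw | apply is_lim_seq_const].
Qed.

Lemma is_lim_Cseq_parts (u : nat -> C) (l : C) :
  is_lim_seq (fun n => fst (u n)) (fst l) -> is_lim_seq (fun n => snd (u n)) (snd l) ->
  is_lim_Cseq u l.
Proof.
  intros Hre Him.
  apply (is_lim_seq_le_le (fun _ => 0) _
           (fun n => sqrt 2 * (Rabs (fst (u n) - fst l) + Rabs (snd (u n) - snd l)))).
  - intros n; split; [apply Cmod_ge_0|].
    eapply Rle_trans; [apply Cmod_2Rmax|].
    apply Rmult_le_compat_l; [apply sqrt_pos|].
    change (fst (u n - l)%C) with (fst (u n) - fst l).
    change (snd (u n - l)%C) with (snd (u n) - snd l).
    pose proof (Rabs_pos (fst (u n) - fst l)); pose proof (Rabs_pos (snd (u n) - snd l)).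
    apply Rmax_lub; lra.
  - apply is_lim_seq_const.
  - replace (Finite 0) with (Rbar_mult (sqrt 2) (Rbar_plus 0 0)) by (simpl; f_equal; ring).
    apply is_lim_seq_scal_l, is_lim_seq_plus'; apply is_lim_seq_dist_0; assumption.
Qed.

Lemma bounded_Cseq_subseq_lim (u : nat -> C) (B : R) :
  (forall n, Cmod (u n) <= B) ->
  exists psi l, strictly_increasing psi /\ is_lim_Cseq (fun n => u (psi n)) l.
Proof.
  intros HB.
  assert (Hparts : forall z : C, Rabs (fst z) <= Cmod z /\ Rabs (snd z) <= Cmod z)
    by (intros z; pose proof (Rmax_Cmod z); split;
        (eapply Rle_trans; [|eassumption]); [apply Rmax_l | apply Rmax_r]).
  destruct (bounded_seq_subseq_lim (fun n => fst (u n)) B) as [p1 [l1 [Hp1 Hl1]]].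
  { intros n; eapply Rle_trans; [apply Hparts | apply HB]. }
  destruct (bounded_seq_subseq_lim (fun n => snd (u (p1 n))) B) as [p2 [l2 [Hp2 Hl2]]].
  { intros n; eapply Rle_trans; [apply Hparts | apply HB]. }
  exists (fun n => p1 (p2 n)), (l1, l2); split; [apply strictly_increasing_comp; assumption|].
  apply is_lim_Cseq_parts; [|exact Hl2].
  exact (is_lim_seq_subseq _ _ _ (eventually_subseq _ Hp2) Hl1).
Qed.

Definition convergent_subseq (u : nat -> C) : nat -> nat :=
  epsilon (inhabits (fun n => n))
    (fun psi => strictly_increasing psi /\ exists l, is_lim_Cseq (fun n => u (psi n)) l).

Lemma convergent_subseq_spec (u : nat -> C) (B : R) :
  (forall n, Cmod (u n) <= B) ->
  strictly_increasing (convergent_subseq u) /\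
  exists l, is_lim_Cseq (fun n => u (convergent_subseq u n)) l.
Proof.
  intros HB; unfold convergent_subseq; apply epsilon_spec.
  destruct (bounded_Cseq_subseq_lim u B HB) as [psi [l [Hpsi Hl]]].
  exists psi; split; [exact Hpsi | exists l; exact Hl].
Qed.

Section Diagonal.

Variables (x : nat -> nat -> C) (B : R).
Hypothesis x_bounded : forall n j, Cmod (x n j) <= B.

(* [nested_subseq j] makes the columns [0..j] converge; each is a subsequence of the previous. *)
Fixpoint nested_subseq (j : nat) : nat -> nat :=
  match j with
  | O => convergent_subseq (fun n => x n O)
  | S j => fun n => nested_subseq j (convergent_subseq (fun m => x (nested_subseq j m) (S j)) n)
  end.

Lemma nested_subseq_spec (j : nat) :
  strictly_increasing (nested_subseq j) /\
  exists l, is_lim_Cseq (fun n => x (nested_subseq j n) j) l.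
Proof.
  induction j as [|j [IHinc _]]; simpl.
  - apply (convergent_subseq_spec (fun n => x n O) B); intros; apply x_bounded.
  - destruct (convergent_subseq_spec (fun m => x (nested_subseq j m) (S j)) B) as [Hinc Hl];
      [intros; apply x_bounded|].
    split; [apply strictly_increasing_comp|]; assumption.
Qed.

Lemma nested_subseq_later (j n : nat) :
  (j <= n)%nat -> forall m, exists m', (m <= m')%nat /\ nested_subseq n m = nested_subseq j m'.
Proof.
  intros Hjn; induction Hjn as [|n _ IH]; intros m; [exists m; split; [lia | reflexivity]|].
  set (psi := convergent_subseq (fun m => x (nested_subseq n m) (S n))).
  assert (Hpsi : strictly_increasing psi)
    by (apply (convergent_subseq_spec _ B); intros; apply x_bounded).
  destruct (IH (psi m)) as [m' [Hm' Heq]].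
  exists m'; split; [pose proof (strictly_increasing_ge psi Hpsi m); lia | exact Heq].
Qed.

Lemma diagonal_extraction :
  exists phi w, strictly_increasing phi /\ forall j, is_lim_Cseq (fun n => x (phi n) j) (w j).
Proof.
  exists (fun n => nested_subseq n n).
  exists (fun j =>
    proj1_sig (constructive_indefinite_description _ (proj2 (nested_subseq_spec j)))).
  split.
  - intros n; simpl.
    set (psi := convergent_subseq (fun m => x (nested_subseq n m) (S n))).
    assert (Hpsi : strictly_increasing psi)
      by (apply (convergent_subseq_spec _ B); intros; apply x_bounded).
    apply strictly_increasing_lt; [apply nested_subseq_spec|].
    pose proof (strictly_increasing_ge psi Hpsi (S n)); lia.
  - intros j.
    destruct (constructive_indefinite_description _ (proj2 (nested_subseq_spec j))) as [l Hl].
    simpl.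
    apply (is_lim_seq_later_terms (fun m => Cmod (x (nested_subseq j m) j - l)) _ 0 j);
      [|exact Hl].
    intros n Hn; destruct (nested_subseq_later j n Hn n) as [m [Hm ->]].
    exists m; split; [exact Hm | reflexivity].
Qed.

End Diagonal.

(** * Sufficiency of [sigma_k -> 0] *)

Lemma is_lim_Cseq_Cmod (u : nat -> C) (l : C) :
  is_lim_Cseq u l -> is_lim_seq (fun n => Cmod (u n)) (Cmod l).
Proof.
  intros Hu.
  apply (is_lim_seq_le_le (fun n => Cmod l - Cmod (u n - l)) _ (fun n => Cmod l + Cmod (u n - l))).
  - intros n.
    pose proof (Cmod_triangle (u n - l) l) as H1.
    pose proof (Cmod_triangle (u n) (- (u n - l))) as H2.
    replace (u n - l + l)%C with (u n) in H1 by ring.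
    replace (u n + - (u n - l))%C with l in H2 by ring.
    rewrite Cmod_opp in H2; lra.
  - replace (Finite (Cmod l)) with (Finite (Cmod l - 0)) by (f_equal; ring).
    apply is_lim_seq_minus'; [apply is_lim_seq_const | exact Hu].
  - replace (Finite (Cmod l)) with (Finite (Cmod l + 0)) by (f_equal; ring).
    apply is_lim_seq_plus'; [apply is_lim_seq_const | exact Hu].
Qed.

Lemma psum_sqr_le_of_coord_lim (F : nat -> nat -> C) (w : nat -> C) (M : R) (N : nat) :
  (forall n, l2 (F n)) -> (forall n, l2norm (F n) <= M) ->
  (forall j, is_lim_Cseq (fun n => F n j) (w j)) ->
  psum (fun j => Cmod (w j) ^ 2) N <= M ^ 2.
Proof.
  intros HF HM Hw.
  assert (HM0 : forall n, 0 <= l2norm (F n)) by (intros; apply sqrt_pos).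
  refine (is_lim_seq_le (fun n => psum (fun j => Cmod (F n j) ^ 2) N) (fun _ => M ^ 2)
            (psum (fun j => Cmod (w j) ^ 2) N) (M ^ 2) _ _ _).
  - intros n; eapply Rle_trans; [apply psum_le_l2norm_sqr, HF|].
    specialize (HM n); specialize (HM0 n); apply pow_incr; lra.
  - apply (psum_is_lim (fun n j => Cmod (F n j) ^ 2)); intros j.
    apply is_lim_seq_sqr, is_lim_Cseq_Cmod, Hw.
  - apply is_lim_seq_const.
Qed.

Definition tail_symbol (K : nat) (alpha : nat -> C) (j : nat) : C :=
  if Nat.leb (2 ^ K) j then alpha j else 0%C.

Lemma tail_symbol_0 (K : nat) (alpha : nat -> C) : tail_symbol K alpha 0%nat = 0%C.
Proof.
  unfold tail_symbol; pose proof (lt_pow2 K).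
  replace (Nat.leb (2 ^ K) 0) with false by (symmetry; apply Nat.leb_gt; lia); reflexivity.
Qed.

Lemma rhaly_tail_symbol (K : nat) (alpha f : nat -> C) (j : nat) :
  (2 ^ K <= j)%nat -> rhaly (tail_symbol K alpha) f j = rhaly alpha f j.
Proof.
  intros Hj; unfold rhaly, tail_symbol.
  replace (Nat.leb (2 ^ K) j) with true by (symmetry; apply Nat.leb_le, Hj); reflexivity.
Qed.

Lemma tail_symbol_block_le (K : nat) (alpha : nat -> C) (delta : R) :
  0 <= delta -> (forall k, (K <= k)%nat -> dyadic_block (rhaly_weight alpha) k <= delta) ->
  forall k, dyadic_block (rhaly_weight (tail_symbol K alpha)) k <= delta.
Proof.
  intros Hdelta HK k.
  destruct (Nat.lt_ge_cases k K) as [Hk | Hk].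
  - (* the whole block lies below [2^K], where the tail symbol vanishes *)
    assert (Hpow : (2 ^ S k <= 2 ^ K)%nat) by (apply Nat.pow_le_mono_r; lia).
    simpl in Hpow.
    unfold dyadic_block; rewrite (psum_ext _ (fun _ => 0)).
    + rewrite psum_0; exact Hdelta.
    + intros i Hi; unfold rhaly_weight, tail_symbol.
      replace (Nat.leb (2 ^ K) (2 ^ k + i)) with false by (symmetry; apply Nat.leb_gt; lia).
      rewrite Cmod_0; simpl; ring.
  - eapply Rle_trans; [|apply (HK k Hk)].
    apply psum_le; intros i _; unfold rhaly_weight, tail_symbol.
    apply Rmult_le_compat_l; [apply pos_INR|].
    destruct (Nat.leb (2 ^ K) (2 ^ k + i)); [lra|].
    rewrite Cmod_0; pose proof (pow2_ge_0 (Cmod (alpha (2 ^ k + i)%nat))); simpl; lra.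
Qed.

Lemma rhaly_coord_vanishes (alpha : nat -> C) (D : nat -> nat -> C) (j : nat) :
  (forall l, is_lim_seq (fun n => Cmod (D n l)) 0) ->
  is_lim_seq (fun n => Cmod (rhaly alpha (D n) j)) 0.
Proof.
  intros HD.
  apply (is_lim_seq_le_le (fun _ => 0) _
           (fun n => Cmod (alpha j) * psum (fun l => Cmod (D n l)) (S j))).
  - intros n; split; [apply Cmod_ge_0 | apply Cmod_rhaly_le].
  - apply is_lim_seq_const.
  - replace (Finite 0) with (Rbar_mult (Cmod (alpha j)) (psum (fun _ => 0) (S j)))
      by (rewrite psum_0; simpl; f_equal; ring).
    apply is_lim_seq_scal_l, (psum_is_lim (fun n l => Cmod (D n l))), HD.
Qed.

Lemma rhaly_tail_psum_le (K : nat) (alpha f : nat -> C) (delta : R) (N : nat) :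
  0 <= delta -> (forall k, (K <= k)%nat -> dyadic_block (rhaly_weight alpha) k <= delta) ->
  psum (fun j => Cmod (rhaly (tail_symbol K alpha) f j) ^ 2) N
  <= 12 * delta * psum (fun j => Cmod (f j) ^ 2) N.
Proof.
  intros Hdelta HK.
  eapply Rle_trans; [apply (rhaly_psum_le _ _ delta), tail_symbol_block_le; assumption|].
  rewrite tail_symbol_0, Cmod_0; right; ring.
Qed.

Lemma psum_rhaly_tail_split (K : nat) (alpha f : nat -> C) (N : nat) :
  psum (fun j => Cmod (rhaly alpha f j) ^ 2) N
  <= psum (fun j => Cmod (rhaly alpha f j) ^ 2) (2 ^ K)
     + psum (fun j => Cmod (rhaly (tail_symbol K alpha) f j) ^ 2) N.
Proof.
  set (h := fun j => Cmod (rhaly alpha f j) ^ 2).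
  apply Rle_trans with
    (psum (fun j => (if Nat.ltb j (2 ^ K) then h j else 0)
                    + Cmod (rhaly (tail_symbol K alpha) f j) ^ 2) N).
  - apply psum_le; intros j _; unfold h.
    destruct (Nat.ltb j (2 ^ K)) eqn:E.
    + pose proof (pow2_ge_0 (Cmod (rhaly (tail_symbol K alpha) f j))); lra.
    + apply Nat.ltb_ge in E; rewrite rhaly_tail_symbol by exact E; lra.
  - rewrite psum_plus, psum_cut.
    apply Rplus_le_compat_r, psum_le_psum; [intros; apply pow2_ge_0 | apply Nat.le_min_r].
Qed.

Lemma rhaly_l2norm_vanishes (alpha : nat -> C) (D : nat -> nat -> C) (c : R) :
  is_lim_seq (rhaly_sigma alpha) 0 ->
  (forall n N, psum (fun l => Cmod (D n l) ^ 2) N <= c) ->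
  (forall l, is_lim_seq (fun n => Cmod (D n l)) 0) ->
  is_lim_seq (fun n => l2norm (rhaly alpha (D n))) 0.
Proof.
  intros Hsig Hc HD.
  assert (Hc0 : 0 <= c) by (apply (Hc O O)).
  apply is_lim_seq_spec; intros eps.
  pose proof (cond_pos eps) as Heps.
  set (delta := eps ^ 2 / (48 * (c + 1))).
  assert (Hdelta : 0 < delta) by (apply Rdiv_lt_0_compat; [apply pow_lt | ]; lra).
  destruct (rhaly_block_eventually_le alpha delta Hsig Hdelta) as [K HK].
  assert (Htail : forall n N,
             psum (fun j => Cmod (rhaly (tail_symbol K alpha) (D n) j) ^ 2) N <= eps ^ 2 / 4).
  { intros n N.
    eapply Rle_trans; [apply (rhaly_tail_psum_le K alpha (D n) delta); [lra | exact HK]|].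
    apply Rle_trans with (12 * delta * (c + 1)); [|right; unfold delta; field; lra].
    apply Rmult_le_compat_l; [lra|]; specialize (Hc n N); lra. }
  (* below [2^K] only finitely many coordinates remain, each tending to 0 *)
  assert (Hhead : is_lim_seq (fun n => psum (fun j => Cmod (rhaly alpha (D n) j) ^ 2) (2 ^ K)) 0).
  { rewrite <- (psum_0 (2 ^ K)).
    apply (psum_is_lim (fun n j => Cmod (rhaly alpha (D n) j) ^ 2)); intros j.
    replace 0 with (0 ^ 2) by ring.
    apply is_lim_seq_sqr, rhaly_coord_vanishes, HD. }
  assert (Hhalf : 0 < eps ^ 2 / 2) by (pose proof (pow_lt eps 2 Heps); lra).
  destruct (proj2 (is_lim_seq_spec _ _) Hhead (mkposreal _ Hhalf)) as [N0 HN0].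
  exists N0; intros n Hn; specialize (HN0 n Hn); cbn [pos] in HN0.
  rewrite Rminus_0_r, Rabs_right in HN0 by (apply Rle_ge, psum_ge0; intros; apply pow2_ge_0).
  destruct (l2_psum_bounded (rhaly alpha (D n)) (eps ^ 2 / 2 + eps ^ 2 / 4)) as [_ Hnorm].
  { intros N; eapply Rle_trans; [apply (psum_rhaly_tail_split K)|].
    specialize (Htail n N); lra. }
  rewrite Rminus_0_r, Rabs_right by (apply Rle_ge, sqrt_pos).
  eapply Rle_lt_trans; [exact Hnorm|].
  pose proof (pow_lt eps 2 Heps).
  apply Rlt_le_trans with (sqrt (eps ^ 2)); [apply sqrt_lt_1_alt; lra | rewrite sqrt_pow2; lra].
Qed.

Lemma rhaly_compact_of_sigma_lim (alpha : nat -> C) :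
  is_lim_seq (rhaly_sigma alpha) 0 -> compact_l2_op (rhaly alpha).
Proof.
  intros Hsig.
  destruct (rhaly_block_bounded alpha Hsig) as [s Hs].
  split; [intros f Hf; exact (rhaly_l2 alpha f s Hs Hf)|].
  intros F HF [M HM].
  assert (HF2 : forall n N, psum (fun j => Cmod (F n j) ^ 2) N <= M ^ 2).
  { intros n N; eapply Rle_trans; [apply psum_le_l2norm_sqr, HF|].
    pose proof (sqrt_pos (Series (fun j => Cmod (F n j) ^ 2))).
    apply pow_incr; split; [assumption | apply HM]. }
  assert (Hcoord : forall n j, Cmod (F n j) <= M)
    by (intros n j; eapply Rle_trans; [apply Cmod_le_l2norm, HF | apply HM]).
  destruct (diagonal_extraction F M Hcoord) as [phi [w [Hphi Hw]]].
  assert (Hw2 : forall N, psum (fun j => Cmod (w j) ^ 2) N <= M ^ 2)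
    by (intros N; apply (psum_sqr_le_of_coord_lim (fun n => F (phi n))); auto).
  assert (Hwl2 : l2 w) by (apply (l2_psum_bounded w (M ^ 2)), Hw2).
  exists phi, (rhaly alpha w); split; [|split].
  - apply strictly_increasing_lt, Hphi.
  - exact (rhaly_l2 alpha w s Hs Hwl2).
  - apply (is_lim_seq_ext (fun n => l2norm (rhaly alpha (fun l => F (phi n) l - w l)%C))).
    { intros n; apply l2norm_ext; intros j; symmetry; apply rhaly_sub. }
    apply (rhaly_l2norm_vanishes alpha _ (4 * M ^ 2) Hsig); [|exact Hw].
    intros n N; eapply Rle_trans.
    + apply psum_le; intros j _; apply Cmod_sub_sqr_le.
    + rewrite psum_plus, !psum_scal; specialize (HF2 (phi n) N); specialize (Hw2 N); lra.
Qed.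

(** * Necessity of [sigma_k -> 0] *)

Lemma compact_l2_op_vanishing (T : (nat -> C) -> nat -> C) (F : nat -> nat -> C) :
  compact_l2_op T -> (forall n, l2 (F n)) -> (exists M, forall n, l2norm (F n) <= M) ->
  (forall j, is_lim_seq (fun n => Cmod (T (F n) j)) 0) ->
  exists phi, strictly_increasing phi /\ is_lim_seq (fun n => l2norm (T (F (phi n)))) 0.
Proof.
  intros [HT Hcomp] HF HM Hcoord.
  destruct (Hcomp F HF HM) as [phi [g [Hphi [Hg Hlim]]]].
  assert (Hinc : strictly_increasing phi) by (intros n; apply Hphi; lia).
  (* the limit [g] is the coordinatewise limit of [T (F (phi n))], hence [0] *)
  assert (Hg0 : forall j, g j = 0%C).
  { intros j; apply Cmod_eq_0, Rle_antisym; [|apply Cmod_ge_0].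
    assert (Hbound : is_lim_seq (fun n => Cmod (T (F (phi n)) j)
                                          + l2norm (fun l => T (F (phi n)) l - g l)%C) 0).
    { replace (Finite 0) with (Rbar_plus 0 0) by (simpl; f_equal; ring).
      apply is_lim_seq_plus'; [|exact Hlim].
      exact (is_lim_seq_subseq _ _ _ (eventually_subseq _ Hinc) (Hcoord j)). }
    refine (is_lim_seq_le (fun _ => Cmod (g j)) _ (Cmod (g j)) 0 _ (is_lim_seq_const _) Hbound).
    intros n; eapply Rle_trans; [|apply Rplus_le_compat_l, (Cmod_le_l2norm _ j)].
    - pose proof (Cmod_triangle (T (F (phi n)) j) (- (T (F (phi n)) j - g j))) as Htri.
      rewrite Cmod_opp in Htri; replace (T (F (phi n)) j + - (T (F (phi n)) j - g j))%C
        with (g j) in Htri by ring; exact Htri.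
    - apply l2_sub; [apply HT, HF | exact Hg]. }
  exists phi; split; [exact Hinc|].
  refine (is_lim_seq_ext _ _ _ (fun n => l2norm_ext _ _ _) Hlim).
  intros l; rewrite Hg0; ring.
Qed.

Definition dyadic_test (k l : nat) : C :=
  RtoC (if Nat.ltb l (2 ^ k) then sqrt ((/ 2) ^ k) else 0).

Lemma INR_pow2_mul_inv (k : nat) : INR (2 ^ k) * (/ 2) ^ k = 1.
Proof.
  rewrite pow_INR, <- Rpow_mult_distr.
  replace (INR 2 * / 2) with 1 by (simpl; field); apply pow1.
Qed.

Lemma dyadic_test_l2 (k : nat) : l2 (dyadic_test k) /\ l2norm (dyadic_test k) <= 1.
Proof.
  rewrite <- sqrt_1; apply l2_psum_bounded; intros N.
  assert (Hc : 0 <= (/ 2) ^ k) by (apply pow_le; lra).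
  rewrite (psum_ext _ (fun l => if Nat.ltb l (2 ^ k) then (/ 2) ^ k else 0)).
  - rewrite psum_cut.
    apply Rle_trans with (psum (fun _ => (/ 2) ^ k) (2 ^ k));
      [apply psum_le_psum; [intros; exact Hc | apply Nat.le_min_r]|].
    rewrite psum_const, INR_pow2_mul_inv; lra.
  - intros l _; unfold dyadic_test; rewrite Cmod_R.
    destruct (Nat.ltb l (2 ^ k)); [rewrite pow2_abs, pow2_sqrt by exact Hc | rewrite Rabs_R0].
    all: simpl; ring.
Qed.

Lemma sum_n_RtoC (h : nat -> R) (j : nat) : sum_n (fun l => RtoC (h l)) j = RtoC (psum h (S j)).
Proof.
  induction j as [|j IH].
  - rewrite sum_O; simpl; f_equal; ring.
  - rewrite sum_Sn, IH; unfold plus; simpl; rewrite <- RtoC_plus; reflexivity.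
Qed.

Lemma Cmod_rhaly_dyadic_test (alpha : nat -> C) (k j : nat) :
  Cmod (rhaly alpha (dyadic_test k) j)
  = Cmod (alpha j) * (INR (Nat.min (S j) (2 ^ k)) * sqrt ((/ 2) ^ k)).
Proof.
  unfold rhaly, dyadic_test; rewrite sum_n_RtoC, Cmod_mult, Cmod_R.
  rewrite psum_cut, psum_const, Rabs_pos_eq; [reflexivity|].
  apply Rmult_le_pos; [apply pos_INR | apply sqrt_pos].
Qed.

Lemma rhaly_dyadic_test_coord_vanishes (alpha : nat -> C) (j : nat) :
  is_lim_seq (fun k => Cmod (rhaly alpha (dyadic_test k) j)) 0.
Proof.
  apply (is_lim_seq_le_le (fun _ => 0) _ (fun k => Cmod (alpha j) * INR (S j) * sqrt ((/ 2) ^ k))).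
  - intros k; rewrite Cmod_rhaly_dyadic_test; split.
    + apply Rmult_le_pos; [apply Cmod_ge_0|].
      apply Rmult_le_pos; [apply pos_INR | apply sqrt_pos].
    + rewrite Rmult_assoc; apply Rmult_le_compat_l; [apply Cmod_ge_0|].
      apply Rmult_le_compat_r; [apply sqrt_pos | apply le_INR, Nat.le_min_l].
  - apply is_lim_seq_const.
  - replace (Finite 0) with (Rbar_mult (Cmod (alpha j) * INR (S j)) (sqrt 0))
      by (rewrite sqrt_0; simpl; f_equal; ring).
    apply is_lim_seq_scal_l, is_lim_seq_continuous; [apply continuity_pt_sqrt; lra|].
    apply is_lim_seq_geom; rewrite Rabs_pos_eq; lra.
Qed.

Lemma rhaly_sigma_le_dyadic_test (alpha : nat -> C) (k : nat) :
  l2 (rhaly alpha (dyadic_test k)) ->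
  rhaly_sigma alpha k <= sqrt 2 * l2norm (rhaly alpha (dyadic_test k)).
Proof.
  intros Hl2.
  set (h := fun j => Cmod (rhaly alpha (dyadic_test k) j) ^ 2).
  unfold rhaly_sigma; rewrite sum_n_m_dyadic.
  rewrite <- (sqrt_pow2 (l2norm _)) by apply sqrt_pos.
  rewrite <- sqrt_mult by (lra || apply pow2_ge_0).
  apply sqrt_le_1_alt, Rle_trans with (2 * psum (fun i => h (2 ^ k + i)%nat) (2 ^ k)).
  - (* on the block, [h j = 2^k |alpha j|^2] while the weight is at most [2^(k+1) |alpha j|^2] *)
    unfold dyadic_block; rewrite <- psum_scal; apply psum_le; intros i Hi.
    unfold h, rhaly_weight; rewrite Cmod_rhaly_dyadic_test, Nat.min_r by lia.
    rewrite !Rpow_mult_distr, pow2_sqrt by (apply pow_le; lra).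
    replace (INR (2 ^ k) ^ 2 * (/ 2) ^ k) with (INR (2 ^ k))
      by (simpl; rewrite Rmult_assoc, (Rmult_comm (INR (2 ^ k) * 1)), <- Rmult_assoc,
            INR_pow2_mul_inv; ring).
    assert (INR (2 ^ k + i + 1) <= 2 * INR (2 ^ k))
      by (replace (2 * INR (2 ^ k)) with (INR (2 ^ k + 2 ^ k)) by (rewrite plus_INR; ring);
          apply le_INR; lia).
    pose proof (pow2_ge_0 (Cmod (alpha (2 ^ k + i)%nat))); nra.
  - apply Rmult_le_compat_l; [lra|].
    eapply Rle_trans; [|apply (psum_le_l2norm_sqr _ (2 ^ k + 2 ^ k) Hl2)].
    fold h; rewrite psum_add.
    pose proof (psum_ge0 h (2 ^ k) (fun _ => pow2_ge_0 _)); lra.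
Qed.

Lemma rhaly_sigma_lim_of_compact (alpha : nat -> C) :
  compact_l2_op (rhaly alpha) -> is_lim_seq (rhaly_sigma alpha) 0.
Proof.
  intros Hcomp; apply NNPP; intros Hnot.
  destruct (not_lim_subseq _ Hnot) as [eps [psi [Heps [Hpsi Hfar]]]].
  destruct (compact_l2_op_vanishing (rhaly alpha) (fun i => dyadic_test (psi i)) Hcomp)
    as [phi [Hphi Hnull]].
  - intros i; apply dyadic_test_l2.
  - exists 1; intros i; apply dyadic_test_l2.
  - intros j; exact (is_lim_seq_subseq _ _ _ (eventually_subseq _ Hpsi)
                       (rhaly_dyadic_test_coord_vanishes alpha j)).
  - assert (Hsig : is_lim_seq (fun n => rhaly_sigma alpha (psi (phi n))) 0).
    { apply (is_lim_seq_le_le (fun _ => 0) _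
               (fun n => sqrt 2 * l2norm (rhaly alpha (dyadic_test (psi (phi n)))))).
      - intros n; split; [apply sqrt_pos|].
        apply rhaly_sigma_le_dyadic_test, (proj1 Hcomp), dyadic_test_l2.
      - apply is_lim_seq_const.
      - replace (Finite 0) with (Rbar_mult (sqrt 2) 0) by (simpl; f_equal; ring).
        apply is_lim_seq_scal_l, Hnull. }
    refine (Rlt_not_le _ _ Heps (is_lim_seq_le (fun _ => eps) _ eps 0 _ (is_lim_seq_const _) Hsig)).
    intros n; specialize (Hfar (phi n)); rewrite Rabs_pos_eq in Hfar by apply sqrt_pos; exact Hfar.
Qed.

Theorem theorem2p7 (alpha : nat -> C) (Halpha : l2 alpha) :
  compact_l2_op (rhaly alpha) <-> is_lim_seq (rhaly_sigma alpha) 0%R.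
Proof.
  split; [apply rhaly_sigma_lim_of_compact | apply rhaly_compact_of_sigma_lim].
Qed.
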